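(* Let $p>2$ and let $r=p/(p-1)$. Let $x=\sum_{i=1}^m\lambda_ie_i\in\mathbb{R}^m$ with $\|x\|_p=1$ and $\lambda_i\neq0$ for all $i\in\{1,\dots,m\}$, and let $d\in\mathbb{R}^m$ be given by $d_i=\operatorname{sign}(\lambda_i)|\lambda_i|^{p-1}$ (the unique vector with $\|d\|_r=1$ in the normal cone of the unit $\ell_p$ ball at $x$). Then there exists $\alpha>0$ such that the unit $\ell_p$ ball $\ell_p(1)=\{y:\|y\|_p\leq1\}$ is $(\alpha,2)$-locally uniformly convex at $x$ with respect to $d$, i.e. for every $\epsilon\in[0,2]$, $\inf\{\langle d,x-y\rangle: y\in\ell_p(1),\ \|x-y\|_p\geq\epsilon\}\geq\alpha\epsilon^2$; equivalently, $\langle d,x-y\rangle\geq\alpha\|x-y\|_p^2$ for all $y\in\ell_p(1)$.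
   Context: $e_1,\dots,e_m$ is the canonical basis of $\mathbb{R}^m$ and $\|\cdot\|_p$ the $\ell_p$ norm; its dual norm is $\|\cdot\|_r$ with $1/p+1/r=1$. *)

From HB Require Import structures.
From mathcomp Require Import all_boot all_order all_algebra.
From mathcomp Require Import all_classical all_reals.
From mathcomp Require Import exp.
Set Implicit Arguments. Unset Strict Implicit. Unset Printing Implicit Defensive.
Import Order.TTheory GRing.Theory Num.Theory.
Local Open Scope ring_scope.

(* Vectors of R^m are functions 'I_m -> R (coordinates w.r.t. e_1..e_m). *)

Definition lpnorm (R : realType) (m : nat) (p : R) (x : 'I_m -> R) : R :=
  (\sum_(i < m) `|x i| `^ p) `^ p^-1.

Definition dotp (R : realType) (m : nat) (u v : 'I_m -> R) : R :=
  \sum_(i < m) u i * v i.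

Definition lp_ball1 (R : realType) (m : nat) (p : R) (y : 'I_m -> R) : Prop :=
  lpnorm p y <= 1.

(* K is (alpha,q)-locally uniformly convex at x w.r.t. d, for the norm nrm:
   for every eps in [0,2],
   inf { <d, x - y> : y in K, nrm (x - y) >= eps } >= alpha * eps^q.
   (An infimum is >= c iff every element of the set is >= c; inf of the
   empty set is +oo.) *)
Definition loc_unif_convex (R : realType) (m : nat)
    (nrm : ('I_m -> R) -> R) (K : ('I_m -> R) -> Prop)
    (x d : 'I_m -> R) (alpha q : R) : Prop :=
  forall eps : R, 0 <= eps <= 2 ->
    forall y : 'I_m -> R, K y -> eps <= nrm (fun i => x i - y i) ->
      alpha * eps `^ q <= dotp d (fun i => x i - y i).

From HB Require Import structures.
From mathcomp Require Import all_boot all_order all_algebra.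
From mathcomp Require Import all_classical all_reals.
From mathcomp Require Import exp.
From mathcomp Require Import all_analysis.
From mathcomp Require Import lra ring.
Set Implicit Arguments. Unset Strict Implicit. Unset Printing Implicit Defensive.
Import Order.TTheory GRing.Theory Num.Theory.
Local Open Scope ring_scope.

(** Since p >= 2, the map s |-> s^(p/2) is convex on [0, +oo), and its tangent
    inequality at a^2, evaluated at t^2, is the second-order bound
      |t|^p >= |a|^p + p sg(a)|a|^(p-1) (t - a) + (p/2) |a|^(p-2) (t - a)^2.
    Summing it over the coordinates of x and y and using
    sum_i |y_i|^p <= 1 = sum_i |x_i|^p gives
      <d, x - y> >= 1/2 sum_i |x_i|^(p-2) (x_i - y_i)^2 >= mu/2 |x - y|_oo^2,
    where mu = min_i |x_i|^(p-2) > 0 because no coordinate of x vanishes.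
    Finally |x - y|_p <= m^(1/p) |x - y|_oo, so alpha = mu / (2 m^(2/p)). *)

Section powR_tangent.
Context {R : realType}.

Lemma powR_MVT (q a b : R) : 0 < a -> a < b ->
  exists2 c, a < c < b & b `^ q - a `^ q = q * c `^ (q - 1) * (b - a).
Proof.
move=> a_gt0 ab.
have [||c] := @MVT R (fun x => x `^ q) (fun x => q * x `^ (q - 1)) a b ab.
- move=> x; rewrite in_itv /= => /andP[ax _].
  by apply: is_derive1_powR; apply: lt_trans ax.
- apply: derivable_within_continuous => x; rewrite in_itv /= => /andP[ax _].
  by apply: derivable_powR; rewrite in_itv /= andbT (lt_le_trans a_gt0).
by rewrite in_itv /= => acb ->; exists c.
Qed.

Lemma powR_tangent_le (q u v : R) : 1 <= q -> 0 < v -> 0 <= u ->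
  v `^ q + q * v `^ (q - 1) * (u - v) <= u `^ q.
Proof.
move=> q_ge1 v_gt0.
have q_gt0 : 0 < q by apply: lt_le_trans q_ge1.
rewrite le_eqVlt => /predU1P[<-|u_gt0].
  have vq : v * v `^ (q - 1) = v `^ q by rewrite mulr_powRB1 ?ltW.
  rewrite powR0 ?gt_eqF // sub0r mulrN -mulrA (mulrC _ v) vq.
  have : 0 <= (q - 1) * v `^ q by rewrite mulr_ge0 ?powR_ge0 ?subr_ge0.
  lra.
have powR_le (c w : R) : 0 < c -> c <= w -> c `^ (q - 1) <= w `^ (q - 1).
  move=> c_gt0 cw; have w_gt0 := lt_le_trans c_gt0 cw.
  by apply: ge0_ler_powR; rewrite ?subr_ge0 //; apply: ltW.
case: (ltgtP u v) => [uv|vu|->]; last by rewrite subrr mulr0 addr0.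
- have [c /andP[uc cv] E] := powR_MVT q u_gt0 uv.
  have : q * c `^ (q - 1) * (v - u) <= q * v `^ (q - 1) * (v - u).
    by rewrite ler_pM2r ?subr_gt0 // ler_pM2l // powR_le ?ltW // (lt_trans u_gt0).
  lra.
- have [c /andP[vc cu] E] := powR_MVT q v_gt0 vu.
  have : q * v `^ (q - 1) * (u - v) <= q * c `^ (q - 1) * (u - v).
    by rewrite ler_pM2r ?subr_gt0 // ler_pM2l // powR_le ?ltW.
  lra.
Qed.

Lemma normr_powR_quadratic_minorant (p a t : R) : 2 <= p -> a != 0 ->
  `|a| `^ p + p * (Num.sg a * `|a| `^ (p - 1)) * (t - a)
    + p / 2 * `|a| `^ (p - 2) * (t - a) ^+ 2 <= `|t| `^ p.
Proof.
move=> p_ge2 a_neq0.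
have q_ge1 : 1 <= p / 2 by rewrite ler_pdivlMr // mul1r.
have sqr_powR (x s : R) : (x ^+ 2) `^ (s / 2) = `|x| `^ s.
  rewrite -real_normK ?num_real // -powR_mulrn // -powRrM.
  by congr (_ `^ _); field.
have a2_gt0 : 0 < a ^+ 2 by rewrite exprn_even_gt0 // a_neq0 orbT.
have sg_powR : Num.sg a * `|a| `^ (p - 1) = a * `|a| `^ (p - 2).
  rewrite -(mulr_powRB1 (normr_ge0 a)); last by lra.
  by rewrite mulrA -(numEsg a); congr (_ * _ `^ _); ring.
have := powR_tangent_le q_ge1 a2_gt0 (sqr_ge0 t).
have -> : p / 2 - 1 = (p - 2) / 2 by field.
rewrite !sqr_powR sg_powR => tangent.
by apply: le_trans tangent; rewrite le_eqVlt; apply/predU1P; left; field.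
Qed.

End powR_tangent.

Section lpnorm.
Context {R : realType} {m : nat} (p : R).
Hypothesis p_gt0 : 0 < p.

Lemma lpnorm_ge0 (x : 'I_m -> R) : 0 <= lpnorm p x.
Proof. exact: powR_ge0. Qed.

Lemma lpnorm_powR (x : 'I_m -> R) : lpnorm p x `^ p = \sum_(i < m) `|x i| `^ p.
Proof.
rewrite /lpnorm -powRrM mulVf ?gt_eqF // powRr1 //.
by apply: sumr_ge0 => i _; apply: powR_ge0.
Qed.

Lemma sum_powR_le_of_lpnorm_le (x y : 'I_m -> R) : lpnorm p y <= lpnorm p x ->
  \sum_(i < m) `|y i| `^ p <= \sum_(i < m) `|x i| `^ p.
Proof.
move=> yx; rewrite -!lpnorm_powR.
by apply: ge0_ler_powR; rewrite ?nnegrE ?lpnorm_ge0 ?(ltW p_gt0).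
Qed.

Lemma lpnorm_le_max (x : 'I_m -> R) (M : R) : 0 <= M -> (forall i, `|x i| <= M) ->
  lpnorm p x <= m%:R `^ p^-1 * M.
Proof.
move=> M_ge0 xM.
have -> : M = (M `^ p) `^ p^-1 by rewrite -powRrM mulfV ?gt_eqF // powRr1.
rewrite -powRM ?ler0n ?powR_ge0 // /lpnorm.
apply: ge0_ler_powR; rewrite ?invr_ge0 ?nnegrE ?mulr_ge0 ?ler0n ?powR_ge0 ?(ltW p_gt0) //.
  by apply: sumr_ge0 => i _; apply: powR_ge0.
rewrite mulr_natl -[X in _ *+ X]card_ord -sumr_const; apply: ler_sum => i _.
by apply: ge0_ler_powR; rewrite ?nnegrE ?(ltW p_gt0).
Qed.

End lpnorm.

Lemma lpnorm_sqr_le_weighted_sumsq {R : realType} {m : nat} (p mu : R)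
    (w h : 'I_m -> R) : 0 < p -> 0 <= mu -> (forall i, mu <= w i) ->
  mu * lpnorm p h ^+ 2 <= (m%:R `^ p^-1) ^+ 2 * \sum_(i < m) w i * h i ^+ 2.
Proof.
move=> p_gt0 mu_ge0 mu_le_w.
case: m h w mu_le_w => [|n] h w mu_le_w.
  by rewrite /lpnorm !big_ord0 powR0 ?invr_eq0 ?gt_eqF // expr0n !mulr0.
have [j _ h_le] := @arg_maxP _ R _ ord0 xpredT (fun i => `|h i|) isT.
have w_ge0 i : 0 <= w i by apply: le_trans (mu_le_w i).
have hM : lpnorm p h ^+ 2 <= (n.+1%:R `^ p^-1) ^+ 2 * `|h j| ^+ 2.
  rewrite -exprMn; apply: lerXn2r; rewrite ?nnegrE ?mulr_ge0 ?powR_ge0 //.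
  by apply: lpnorm_le_max => // i; apply: h_le.
apply: le_trans (ler_wpM2l mu_ge0 hM) _.
rewrite mulrCA ler_wpM2l ?exprn_ge0 ?powR_ge0 // (bigD1 j) //= -[X in X <= _]addr0.
apply: lerD; first by rewrite real_normK ?num_real // ler_wpM2r ?sqr_ge0.
by apply: sumr_ge0 => i _; rewrite mulr_ge0 ?sqr_ge0.
Qed.

Lemma dotp_ge_half_weighted_sumsq {R : realType} {m : nat} (p : R)
    (x y : 'I_m -> R) :
  2 <= p -> (forall i, x i != 0) -> lpnorm p y <= lpnorm p x ->
  (\sum_(i < m) `|x i| `^ (p - 2) * (x i - y i) ^+ 2) / 2 <=
  dotp (fun i => Num.sg (x i) * `|x i| `^ (p - 1)) (fun i => x i - y i).
Proof.
move=> p_ge2 x_neq0 yx.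
have p_gt0 : 0 < p by apply: lt_le_trans p_ge2.
have := @ler_sum _ _ (index_enum 'I_m) xpredT _ _
  (fun i _ => normr_powR_quadratic_minorant (y i) p_ge2 (x_neq0 i)).
move/le_trans/(_ (sum_powR_le_of_lpnorm_le p_gt0 yx)).
rewrite !big_split /=.
under [X in _ + X + _ <= _]eq_bigr do rewrite -mulrA -[y _ - x _]opprB mulrN.
under [X in _ + X <= _]eq_bigr do rewrite -mulrA -[y _ - x _]opprB sqrrN.
rewrite -!mulr_sumr sumrN /dotp.
by move=> ineq; rewrite -(ler_pM2l p_gt0); lra.
Qed.

Theorem mainTheorem2 (R : realType) (m : nat) (p : R) (lambda : 'I_m -> R) :
  2 < p ->
  lpnorm p lambda = 1 ->
  (forall i, lambda i != 0) ->
  let r := p / (p - 1) in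
  let d := fun i => Num.sg (lambda i) * `|lambda i| `^ (p - 1) in
  exists alpha : R, 0 < alpha /\
    loc_unif_convex (lpnorm p) (lp_ball1 p) lambda d alpha 2.
Proof.
move=> p_gt2 lambda_norm1 lambda_neq0 _ d.
have p_gt0 : 0 < p by apply: lt_trans p_gt2.
have m_gt0 : (0 < m)%N.
  move: (lpnorm_powR p_gt0 lambda); rewrite lambda_norm1 powR1.
  case: m lambda {lambda_norm1 lambda_neq0 d} => // lambda.
  by rewrite big_ord0 => /eqP; rewrite oner_eq0.
pose w i := `|lambda i| `^ (p - 2).
have [j _ w_min] := @arg_minP _ R _ (Ordinal m_gt0) xpredT w isT.
pose K := (m%:R `^ p^-1) ^+ 2.
have w_gt0 : 0 < w j by rewrite powR_gt0 // normr_gt0.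
have K_gt0 : 0 < K by rewrite exprn_gt0 // powR_gt0 // ltr0n.
have alpha_gt0 : 0 < w j / (2 * K) by rewrite divr_gt0 // mulr_gt0.
exists (w j / (2 * K)); split => // eps /andP[eps_ge0 _] y y_ball eps_le.
set h := fun i => lambda i - y i.
have y_le : lpnorm p y <= lpnorm p lambda by rewrite lambda_norm1.
have dotp_ge := dotp_ge_half_weighted_sumsq (ltW p_gt2) lambda_neq0 y_le.
have w_le i : w j <= w i by apply: w_min.
have sumsq_ge := lpnorm_sqr_le_weighted_sumsq h p_gt0 (ltW w_gt0) w_le.
have eps_sqr : eps `^ 2 <= lpnorm p h ^+ 2.
  rewrite (powR_mulrn 2 eps_ge0); apply: lerXn2r; last exact: eps_le.
  - by rewrite nnegrE.
  - by rewrite nnegrE lpnorm_ge0.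
apply: le_trans dotp_ge; apply: le_trans (ler_wpM2l (ltW alpha_gt0) eps_sqr) _.
rewrite mulrAC ler_pdivrMr ?(mulr_gt0 (ltr0Sn _ 1) K_gt0) //.
by rewrite [X in _ <= X]mulrA divfK ?pnatr_eq0 // (mulrC _ K).
Qed.
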